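(* Let $n\ge 1$, let $p,p_1,\dots,p_n$ be distinct propositional variables and $s\neq *$ a standpoint symbol. Let $C_n$ be the formula $(\neg p_1\wedge\cdots\wedge\neg p_n)\wedge G\big(p_1\wedge\cdots\wedge p_n\to X(\neg p_1\wedge\cdots\wedge\neg p_n)\big)\wedge\bigwedge_{1\le i\le n}G\Big(\big(\neg p_i\wedge\bigwedge_{i<i'\le n}p_{i'}\big)\to\big(\bigwedge_{i<i'\le n}X\neg p_{i'}\wedge Xp_i\wedge\bigwedge_{1\le i'<i}(p_{i'}\leftrightarrow Xp_{i'})\big)\Big)$, and let $\varphi_C=G\big(\Diamond_s(C_n\wedge p\wedge XG\neg p)\big)$. Then $\varphi_C$ is $\mathrm{SLTL}$-satisfiable. Moreover, for every $\mathrm{SLTL}$ model $M=(\Pi,\lambda)$ and $\sigma\in\Pi$ with $M,\sigma,0\models\varphi_C$: (1) $\lambda(s)$ is infinite; (2) for every $i>2^n$ and every $m\in\{0,\dots,2^n-1\}$ there is $\sigma'\in\Pi$ such that $M,\sigma',i\models \mathtt{C}=m$; (3) for every $i>2^n$ there are $\sigma_1,\dots,\sigma_{2^n}\in\Pi$ such that $|\{\sigma_j(i)\cap\{p_1,\dots,p_n\}: j\in\{1,\dots,2^n\}\}|=2^n$.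
   Context: Fix a countably infinite set $\mathcal{P}$ of propositional variables and a countably infinite set $\mathcal{S}$ of standpoint symbols containing a distinguished universal standpoint symbol $*$. SLTL formulae: $\varphi ::= p \mid s \preceq s' \mid \neg\varphi \mid \varphi\wedge\varphi \mid \Diamond_s\varphi \mid \Box_s\varphi \mid X\varphi \mid \varphi\,U\,\varphi$. A model is $M=(\Pi,\lambda)$ with $\Pi\neq\emptyset$ a set of traces $\sigma:\mathbb{N}\to 2^{\mathcal{P}}$ and $\lambda:\mathcal{S}\to 2^{\Pi}\setminus\{\emptyset\}$, $\lambda( * )=\Pi$. Semantics: $M,\sigma,i\models p$ iff $p\in\sigma(i)$; $M,\sigma,i\models s\preceq s'$ iff $\lambda(s)\subseteq\lambda(s')$; Boolean clauses as usual; $M,\sigma,i\models\Diamond_s\psi$ iff $M,\sigma',i\models\psi$ for some $\sigma'\in\lambda(s)$; $\Box_s$ dually with ''for all''; $M,\sigma,i\models X\psi$ iff $M,\sigma,i+1\models\psi$; $M,\sigma,i\models\psi\,U\,\chi$ iff there is $i'\ge i$ with $M,\sigma,i'\models\chi$ and $M,\sigma,i''\models\psi$ for all $i\le i''<i'$. $G\psi$ abbreviates $\neg(\top\,U\,\neg\psi)$ (''always in the future, including now''). $\varphi$ is satisfiable iff $M,\sigma,0\models\varphi$ for some model $M=(\Pi,\lambda)$ and $\sigma\in\Pi$. For $m\in\{0,\dots,2^n-1\}$, $M,\sigma,i\models\mathtt{C}=m$ means that the bit string $b_1\cdots b_n$ with $b_j=1$ iff $p_j\in\sigma(i)$ ($b_1$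 most significant) is the binary representation of $m$. *)

From mathcomp Require Import all_boot.
From Stdlib Require List.
Set Implicit Arguments. Unset Strict Implicit. Unset Printing Implicit Defensive.

(* Propositional variables: nat (countably infinite).
   Standpoint symbols: Star (the universal standpoint * ) or Sym k, k : nat. *)
Inductive stand := Star | Sym of nat.

Inductive form :=
| Var of nat
| Sharp of stand & stand
| Not of form
| And of form & form
| Dia of stand & form
| Box of stand & form
| Next of form
| Until of form & form.

(* A trace sigma : N -> 2^P, represented as sigma i q = true iff q ∈ sigma(i). *)
Definition trace := nat -> nat -> bool.

Record model := Model {
  Pi : trace -> Prop;
  lam : stand -> trace -> Prop;
  Pi_ne : exists sg, Pi sg;
  lam_sub : forall s sg, lam s sg -> Pi sg;
  lam_ne : forall s, exists sg, lam s sg;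
  lam_star : forall sg, lam Star sg <-> Pi sg
}.

Fixpoint sat (M : model) (sg : trace) (i : nat) (f : form) : Prop :=
  match f with
  | Var q => sg i q = true
  | Sharp s s' => forall t, lam M s t -> lam M s' t
  | Not g => ~ sat M sg i g
  | And g h => sat M sg i g /\ sat M sg i h
  | Dia s g => exists t, lam M s t /\ sat M t i g
  | Box s g => forall t, lam M s t -> sat M t i g
  | Next g => sat M sg i.+1 g
  | Until g h => exists i', i <= i' /\ sat M sg i' h /\
                   (forall i'', i <= i'' -> i'' < i' -> sat M sg i'' g)
  end.

Definition Top : form := Not (And (Var 0) (Not (Var 0))).
Definition Imp (a b : form) : form := Not (And a (Not b)).
Definition Iff (a b : form) : form := And (Imp a b) (Imp b a).
Definition Glob (a : form) : form := Not (Until Top (Not a)).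
Definition bigAnd (l : seq form) : form := foldr And Top l.

Definition satisfiable (f : form) : Prop :=
  exists (M : model) (sg : trace), Pi M sg /\ sat M sg 0 f.

Definition allNeg (pv : nat -> nat) (n : nat) : form :=
  bigAnd [seq Not (Var (pv k)) | k <- iota 1 n].
Definition allPos (pv : nat -> nat) (n : nat) : form :=
  bigAnd [seq Var (pv k) | k <- iota 1 n].

Definition Cn (pv : nat -> nat) (n : nat) : form :=
  And (allNeg pv n)
   (And (Glob (Imp (allPos pv n) (Next (allNeg pv n))))
        (bigAnd [seq Glob (Imp
                   (And (Not (Var (pv i)))
                        (bigAnd [seq Var (pv i') | i' <- iota i.+1 (n - i)]))
                   (And (bigAnd [seq Next (Not (Var (pv i'))) | i' <- iota i.+1 (n - i)])
                     (And (Next (Var (pv i)))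
                          (bigAnd [seq Iff (Var (pv i')) (Next (Var (pv i')))
                                  | i' <- iota 1 (i - 1)]))))
                 | i <- iota 1 n])).

Definition phiC (pv : nat -> nat) (n p : nat) (s : stand) : form :=
  Glob (Dia s (And (Cn pv n) (And (Var p) (Next (Glob (Not (Var p))))))).

(* M, sigma, i |= C = m : the bits b_1...b_n (b_1 most significant,
   b_j = 1 iff p_j ∈ sigma(i)) are the binary representation of m. *)
Definition counterEq (pv : nat -> nat) (n : nat) (sg : trace) (i m : nat) : Prop :=
  m = \sum_(1 <= j < n.+1) (sg i (pv j) : nat) * 2 ^ (n - j).

Definition finite_traces (A : trace -> Prop) : Prop :=
  exists l : seq trace, forall sg, A sg -> List.In sg l.

From mathcomp Require Import all_boot zify.
From Stdlib Require Import Classical ClassicalEpsilon.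
Set Implicit Arguments. Unset Strict Implicit.

(* For every time k, phi_C provides a trace of lambda(s) carrying the marker p
   exactly at time k and on which C_n holds at k.  C_n says precisely that the
   bits p_1 ... p_n (p_1 most significant) form a binary counter started at 0
   at time k, so at time k + d < k + 2^n the counter reads d.  The markers make
   these traces pairwise distinct, hence lambda(s) is infinite, and at a time
   i > 2^n the traces started at i - m, m < 2^n, display all 2^n values.
   Conversely the traces running such a counter from each time k, taken as
   the whole model, satisfy phi_C. *)

Section DerivedConnectives.
Variables (M : model) (t : trace).

Lemma sat_bigAnd_iota (F : nat -> form) a m i :
  sat M t i (bigAnd [seq F x | x <- iota a m]) <->
  (forall x, a <= x < a + m -> sat M t i (F x)).
Proof.
elim: m a => [|m IH] a.
  by split=> [_ x|_ [] //]; lia.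
rewrite /bigAnd /= -/(bigAnd _) IH; split=> [[Fa Fs] x x_in|Fs].
  have [->//|x_neq] := eqVneq x a.
  apply: Fs; lia.
by split=> [|x x_in]; apply: Fs; lia.
Qed.

Lemma sat_And a b i : sat M t i (And a b) <-> sat M t i a /\ sat M t i b.
Proof. by []. Qed.

Lemma sat_Dia s a i :
  sat M t i (Dia s a) <-> exists t', lam M s t' /\ sat M t' i a.
Proof. by []. Qed.

Lemma sat_Next a i : sat M t i (Next a) <-> sat M t i.+1 a.
Proof. by []. Qed.

Lemma sat_Glob a i : sat M t i (Glob a) <-> forall j, i <= j -> sat M t j a.
Proof.
rewrite /Glob /=; split=> [Ga j ij|Ga [j [ij [nGa _]]]]; last exact: nGa (Ga j ij).
by apply: NNPP => nGa; apply: Ga; exists j; do 2!split=> //; move=> ? _ _ [? []].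
Qed.

Lemma sat_Imp a b i : sat M t i (Imp a b) <-> (sat M t i a -> sat M t i b).
Proof.
rewrite /Imp /=; split=> [ab ?|ab [? []]]; last exact: ab.
by apply: NNPP => ?; apply: ab.
Qed.

Lemma sat_Iff a b i : sat M t i (Iff a b) <-> (sat M t i a <-> sat M t i b).
Proof.
change (sat M t i (Imp a b) /\ sat M t i (Imp b a) <-> (sat M t i a <-> sat M t i b)).
by rewrite !sat_Imp.
Qed.

Variable pv : nat -> nat.

Lemma sat_allNeg n i :
  sat M t i (allNeg pv n) <-> forall j, 1 <= j <= n -> ~~ t i (pv j).
Proof. by rewrite /allNeg sat_bigAnd_iota; split=> H j j_in; apply/negP; apply: H; lia. Qed.

Lemma sat_allPos n i :
  sat M t i (allPos pv n) <-> forall j, 1 <= j <= n -> t i (pv j).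
Proof. by rewrite /allPos sat_bigAnd_iota; split=> H j j_in; apply: H; lia. Qed.

End DerivedConnectives.

(* [b i j] is bit p_j at time i; the clauses are the three conjuncts of C_n:
   all bits clear at k, wrap-around after all ones, and increment. *)
Definition counter_run (n : nat) (b : nat -> nat -> bool) (k : nat) : Prop :=
  [/\ forall j, 1 <= j <= n -> ~~ b k j,
      forall i, k <= i -> (forall j, 1 <= j <= n -> b i j) ->
        forall j, 1 <= j <= n -> ~~ b i.+1 j
    & forall i i0, k <= i -> 1 <= i0 <= n -> ~~ b i i0 ->
        (forall j, i0 < j <= n -> b i j) ->
        [/\ forall j, i0 < j <= n -> ~~ b i.+1 j, b i.+1 i0
          & forall j, 1 <= j < i0 -> b i.+1 j = b i j]].

Lemma sat_Cn M t pv n k :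
  sat M t k (Cn pv n) <-> counter_run n (fun i j => t i (pv j)) k.
Proof.
rewrite /Cn !sat_And sat_allNeg !sat_Glob sat_bigAnd_iota.
split=> [[zero [wrap step]]|[zero wrap step]]; [split=> //|do 2!split=> //].
- move=> i ki ones; apply/sat_allNeg/sat_Next.
  by move/sat_Imp: (wrap i ki); apply; apply/sat_allPos.
- move=> i i0 ki i0_in zero_i0 ones.
  move/sat_Glob/(_ i ki)/sat_Imp: (step i0 ltac:(lia)).
  case=> [|down [up same]].
    by split; [exact/negP|apply/sat_bigAnd_iota => j j_in; apply: ones; lia].
  split=> [j j_in|//|j j_in].
    by apply/negP; move/sat_bigAnd_iota: down; apply; lia.
  move/sat_bigAnd_iota/(_ j ltac:(lia))/sat_Iff: same => -[old new].
  by apply/idP/idP; [exact: new|exact: old].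
- move=> i ki; rewrite sat_Imp sat_allPos sat_Next sat_allNeg.
  exact: wrap.
- move=> i0 i0_in; apply/sat_Glob => i ki.
  apply/sat_Imp => -[/negP zero_i0 /sat_bigAnd_iota ones].
  have [down up same] :=
    step i i0 ki ltac:(lia) zero_i0 (fun j j_in => ones j ltac:(lia)).
  split; [|split=> //].
    by apply/sat_bigAnd_iota => j j_in; apply/negP/down; lia.
  apply/sat_bigAnd_iota => j j_in; apply/sat_Iff.
  by rewrite /= same //; lia.
Qed.

Definition bits_val (n : nat) (b : nat -> bool) : nat :=
  \sum_(1 <= j < n.+1) (b j : nat) * 2 ^ (n - j).

Lemma eq_bits_val n (b b' : nat -> bool) :
  (forall j, 1 <= j <= n -> b j = b' j) -> bits_val n b = bits_val n b'.
Proof. by move=> bb'; apply: eq_big_nat => j j_in; rewrite bb' //; lia. Qed.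

Lemma bits_valS n b : bits_val n.+1 b = (bits_val n b).*2 + b n.+1.
Proof.
rewrite /bits_val big_nat_recr //= subnn muln1 -mul2n big_distrr /=; congr (_ + _).
by apply: eq_big_nat => j j_in; rewrite subSn 1?expnS 1?mulnCA //; lia.
Qed.

Lemma eq_bits_val_ord n (b b' : nat -> bool) :
  (forall k : 'I_n, b k.+1 = b' k.+1) -> bits_val n b = bits_val n b'.
Proof.
move=> bb'; apply: eq_bits_val => j j_in.
have lt_j : j.-1 < n by lia.
by have := bb' (Ordinal lt_j); rewrite /= prednK //; lia.
Qed.

Lemma bits_val_zeros n (b : nat -> bool) :
  (forall j, 1 <= j <= n -> ~~ b j) -> bits_val n b = 0.
Proof.
elim: n => [|n IH] zeros; first by rewrite /bits_val big_geq.
rewrite bits_valS IH => [|j j_in]; last by apply: zeros; lia.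
by rewrite (negbTE (zeros n.+1 _)) //; lia.
Qed.

Lemma bits_val_ones n (b : nat -> bool) :
  (forall j, 1 <= j <= n -> b j) -> (bits_val n b).+1 = 2 ^ n.
Proof.
elim: n => [|n IH] ones; first by rewrite /bits_val big_geq.
have ones_n j : 1 <= j <= n -> b j by move=> j_in; apply: ones; lia.
by rewrite bits_valS ones ?expnS -?(IH ones_n) /= ?mul2n ?doubleS //; lia.
Qed.

Lemma last_zero_bit n (b : nat -> bool) : ~ (forall j, 1 <= j <= n -> b j) ->
  exists i0, [/\ 1 <= i0 <= n, ~~ b i0 & forall j, i0 < j <= n -> b j].
Proof.
elim: n => [|n IH] not_ones; first by case: not_ones => j; lia.
case b_last: (b n.+1); last by exists n.+1; rewrite b_last; split=> [|//|j]; lia.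
have [ones_n|i0 [i0_in zero_i0 ones]] := IH.
  apply: not_ones => j j_in; have [->//|?] := eqVneq j n.+1.
  by apply: ones_n; lia.
exists i0; split=> [||j j_in]; [lia|by []|].
by have [->//|?] := eqVneq j n.+1; apply: ones; lia.
Qed.

Lemma bits_val_succ n (b b' : nat -> bool) i0 :
  1 <= i0 <= n -> ~~ b i0 -> (forall j, i0 < j <= n -> b j) ->
  (forall j, i0 < j <= n -> ~~ b' j) -> b' i0 ->
  (forall j, 1 <= j < i0 -> b' j = b j) ->
  bits_val n b' = (bits_val n b).+1.
Proof.
elim: n => [|n IH] i0_in zero_i0 ones zeros' one_i0' same; first lia.
rewrite !bits_valS; have [lt_i0|eq_i0] : i0 < n.+1 \/ i0 = n.+1 by lia.
  have b_last : b n.+1 by apply: ones; lia.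
  have b'_last : b' n.+1 = false by apply/negbTE/zeros'; lia.
  have IHn : bits_val n b' = (bits_val n b).+1.
    by apply: IH => // [|j j_in|j j_in]; [|apply: ones|apply: zeros']; lia.
  by rewrite b_last b'_last IHn /=; lia.
move: zero_i0 one_i0'; rewrite eq_i0 => /negbTE-> ->.
by rewrite (@eq_bits_val n b' b) => [/=|j j_in]; [lia|apply: same; lia].
Qed.

Lemma counter_run_val n b k : counter_run n b k ->
  forall d, d < 2 ^ n -> bits_val n (b (k + d)) = d.
Proof.
case=> zero _ step; elim=> [|d IH] lt_d; first by rewrite addn0 bits_val_zeros.
have val_d := IH (ltnW lt_d).
have [ones|i0 [i0_in zero_i0 ones]] := @last_zero_bit n (b (k + d)).
  by move: lt_d; rewrite -(bits_val_ones ones) val_d ltnn.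
have [down up same] := step (k + d) i0 (leq_addr _ _) i0_in zero_i0 ones.
by rewrite addnS (bits_val_succ i0_in zero_i0 ones down up same) val_d.
Qed.

(* Binary increment: a bit flips iff all less significant bits are set. *)
Definition incr_bits (n : nat) (b : nat -> bool) : nat -> bool :=
  fun j => if all b (iota j.+1 (n - j)) then ~~ b j else b j.

Definition counter_bits (n d : nat) : nat -> bool := iter d (incr_bits n) (fun=> false).

Lemma incr_bits_flip n (b : nat -> bool) j :
  (forall j', j < j' <= n -> b j') -> incr_bits n b j = ~~ b j.
Proof.
move=> ones; rewrite /incr_bits ifT //.
by apply/allP => j'; rewrite mem_iota => j'_in; apply: ones; lia.
Qed.

Lemma incr_bits_keep n (b : nat -> bool) j j0 :
  j < j0 <= n -> ~~ b j0 -> incr_bits n b j = b j.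
Proof.
move=> j0_in zero_j0; rewrite /incr_bits ifF //.
by apply/negbTE/allPn; exists j0; rewrite ?mem_iota //; lia.
Qed.

Lemma counter_run_counter_bits n k : counter_run n (fun i => counter_bits n (i - k)) k.
Proof.
split=> [j _|i ki ones j j_in|i i0 ki i0_in zero_i0 ones]; first by rewrite subnn.
  rewrite subSn //= incr_bits_flip ?ones ?negbK // => j' j'_in; apply: ones; lia.
rewrite subSn //=; split=> [j j_in||j j_in].
- rewrite incr_bits_flip ?negbK; first by apply: ones.
  by move=> j' j'_in; apply: ones; lia.
- by rewrite incr_bits_flip.
- by rewrite (incr_bits_keep _ zero_i0) //; lia.
Qed.

Lemma eq_counter_run n (b b' : nat -> nat -> bool) k :
  (forall i j, k <= i -> 1 <= j <= n -> b i j = b' i j) ->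
  counter_run n b k -> counter_run n b' k.
Proof.
move=> bb' [zero wrap step]; split=> [j j_in|i ki ones j j_in|i i0 ki i0_in].
- by rewrite -bb' ?zero.
- rewrite -bb' ?(wrap i ki) // => [j' j'_in|]; last lia.
  by rewrite bb' ?ones.
- rewrite -bb' // => zero_i0 ones.
  have [|down up same] := step i i0 ki i0_in zero_i0.
    by move=> j j_in; rewrite bb' ?ones //; lia.
  by split=> [j j_in||j j_in]; rewrite -?bb' ?down ?up ?same //; lia.
Qed.

Section CounterTrace.
Variables (pv : nat -> nat) (n p : nat).
Hypothesis pv_inj : forall i j, 1 <= i <= n -> 1 <= j <= n -> pv i = pv j -> i = j.
Hypothesis pv_neq_p : forall i, 1 <= i <= n -> pv i <> p.

Definition counter_trace (k : nat) : trace := fun i q =>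
  (q == p) && (i == k) ||
  (k <= i) && has (fun j => (q == pv j) && counter_bits n (i - k) j) (iota 1 n).

Lemma counter_trace_p k i : counter_trace k i p = (i == k).
Proof.
rewrite /counter_trace eqxx orb_idr // => /andP[_ /hasP[j]].
rewrite mem_iota => j_in /andP[/eqP p_pv _].
by case: (pv_neq_p (i := j)); lia.
Qed.

Lemma counter_trace_pv k i j : 1 <= j <= n ->
  counter_trace k i (pv j) = (k <= i) && counter_bits n (i - k) j.
Proof.
move=> j_in; rewrite /counter_trace.
have /negbTE-> : pv j != p by apply/eqP/pv_neq_p.
congr (_ && _); apply/hasP/idP => [[j' j'_in /andP[/eqP pv_jj' bit]]|bit].
  move: j'_in; rewrite mem_iota => j'_in.
  by rewrite (pv_inj (j := j') _ _ pv_jj') //; lia.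
by exists j; rewrite ?mem_iota ?eqxx //; lia.
Qed.

Lemma counter_trace_Cn M k : sat M (counter_trace k) k (Cn pv n).
Proof.
apply/sat_Cn; apply: eq_counter_run (counter_run_counter_bits n k).
by move=> i j ki j_in; rewrite counter_trace_pv // ki.
Qed.

Lemma phiC_satisfiable s : satisfiable (phiC pv n p s).
Proof.
pose traces t := exists k, t = counter_trace k.
have traces_ne : exists t, traces t by exists (counter_trace 0), 0.
pose M := @Model traces (fun=> traces) traces_ne (fun _ _ => id) (fun=> traces_ne)
  (fun=> iff_refl _).
exists M, (counter_trace 0); split; first by exists 0.
apply/sat_Glob => k _; exists (counter_trace k); split; first by exists k.
split; first exact: counter_trace_Cn.
split; first by change (counter_trace k k p); rewrite counter_trace_p.
by apply/sat_Next/sat_Glob => i ki; apply/negP; rewrite counter_trace_p; lia.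
Qed.

End CounterTrace.

Lemma phiC_counters M sg pv n p s : sat M sg 0 (phiC pv n p s) ->
  exists f : nat -> trace,
    [/\ forall k, lam M s (f k), forall k, counter_run n (fun i j => f k i (pv j)) k,
        forall k, f k k p & forall k i, k < i -> ~~ f k i p].
Proof.
move=> /sat_Glob phi.
have witness k : exists t : trace,
    [/\ lam M s t, counter_run n (fun i j => t i (pv j)) k, t k p
      & forall i, k < i -> ~~ t i p].
  have /sat_Dia[t [t_s /sat_And[t_Cn /sat_And[t_p /sat_Next/sat_Glob t_not_p]]]] :=
    phi k isT.
  by exists t; split=> // [|i ki]; [move/sat_Cn: t_Cn|apply/negP/t_not_p].
have [f f_spec] := choice _ witness.
by exists f; split=> [k|k|k|k]; case: (f_spec k).
Qed.

Lemma marked_traces_inj (f : nat -> trace) p :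
  (forall k, f k k p) -> (forall k i, k < i -> ~~ f k i p) -> injective f.
Proof.
move=> marked unmarked.
have neq k k' : k < k' -> f k <> f k'.
  by move=> lt_kk' eq_f; move: (unmarked k k' lt_kk'); rewrite eq_f marked.
by move=> k k' eq_f; case: (ltngtP k k') => // lt; [|symmetry in eq_f]; case: (neq _ _ lt).
Qed.

Lemma injective_not_finite (A : trace -> Prop) (f : nat -> trace) :
  injective f -> (forall k, A (f k)) -> ~ finite_traces A.
Proof.
move=> f_inj Af [l l_all].
have idx k : exists j : 'I_(size l), List.nth j l (f 0) = f k.
  have [j [/ltP lt_j nth_j]] := List.In_nth _ _ (f 0) (l_all _ (Af k)).
  by exists (Ordinal lt_j).
have [g gP] := choice _ idx.
have g_inj : injective (fun k : 'I_(size l).+1 => g k).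
  by move=> k k' eq_g; apply/val_inj/f_inj; rewrite -gP -(gP k') eq_g.
by have := leq_card _ g_inj; rewrite !card_ord ltnn.
Qed.

Theorem proposition1 (n : nat) (p : nat) (pv : nat -> nat) (s : stand) :
  1 <= n ->
  (forall i j, 1 <= i <= n -> 1 <= j <= n -> pv i = pv j -> i = j) ->
  (forall i, 1 <= i <= n -> pv i <> p) ->
  s <> Star ->
  satisfiable (phiC pv n p s) /\
  (forall (M : model) (sg : trace), Pi M sg -> sat M sg 0 (phiC pv n p s) ->
     ~ finite_traces (lam M s) /\
     (forall i, 2 ^ n < i -> forall m, m < 2 ^ n ->
        exists sg', Pi M sg' /\ counterEq pv n sg' i m) /\
     (forall i, 2 ^ n < i ->
        exists sgs : 'I_(2 ^ n) -> trace,
          (forall j, Pi M (sgs j)) /\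
          #|[set [set k : 'I_n | sgs j i (pv k.+1)] | j : 'I_(2 ^ n)]| = 2 ^ n)).
Proof.
move=> _ pv_inj pv_neq_p _; split; first exact: phiC_satisfiable.
move=> M sg _ /phiC_counters[f [f_s f_run f_marked f_unmarked]].
have f_Pi k : Pi M (f k) := lam_sub (f_s k).
have f_val i m : 2 ^ n < i -> m < 2 ^ n -> bits_val n (fun j => f (i - m) i (pv j)) = m.
  by move=> lt_i lt_m; have := counter_run_val (f_run (i - m)) lt_m; rewrite subnK //; lia.
split; first exact: injective_not_finite (marked_traces_inj f_marked f_unmarked) f_s.
split=> [i lt_i m lt_m|i lt_i]; first by exists (f (i - m)); split; last exact/esym/f_val.
exists (fun j : 'I_(2 ^ n) => f (i - j)); split=> //.
rewrite card_imset ?card_ord // => j j' /setP eq_set; apply/val_inj.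
rewrite /= -(f_val i j) // -(f_val i j') //; apply: eq_bits_val_ord => k.
by have := eq_set k; rewrite !inE.
Qed.
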